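(* Let $\langle X,d\rangle$ be a metric space. The following are equivalent: (1) $X$ is cofinally Bourbaki quasi-complete; (2) $X$ is cofinally Bourbaki complete and every CBC-regular function from $X$ to any metric space $Y$ maps cofinally Bourbaki quasi-Cauchy sequences to cofinally Bourbaki-Cauchy sequences; (3) $X$ is cofinally Bourbaki complete and every real-valued CBC-regular function on $X$ maps cofinally Bourbaki quasi-Cauchy sequences to cofinally Bourbaki-Cauchy sequences; (4) $X$ is cofinally Bourbaki complete and every cofinally Bourbaki quasi-Cauchy sequence in $X$ is cofinally Bourbaki-Cauchy.
   Context: For $\varepsilon>0$, an $\varepsilon$-chain joining $x,y$ is a finite sequence $x=x_0,\dots,x_n=y$ with consecutive distances $<\varepsilon$. A sequence $\langle x_n\rangle$ is cofinally Bourbaki quasi-Cauchy if for every $\varepsilon>0$ there is an infinite $N_\varepsilon\subseteq\mathbb{N}$ such that any $x_j,x_k$ with $j,k\in N_\varepsilon$ can be joined by an $\varepsilon$-chain; $X$ is cofinally Bourbaki quasi-complete if every such sequence has a cluster point. In a metric space $\langle Y,\rho\rangle$ let $S^1_\rho(p,\varepsilon)$ be the open $\varepsilon$-ball about $p$ and $S^{m}_\rho(p,\varepsilon)=\{y:\rho(y,S^{m-1}_\rho(p,\varepsilon))<\varepsilon\}$; a sequence $\langle y_n\rangle$ is cofinally Bourbaki-Cauchy if for every $\varepsilon>0$ there exist an infinite $N_\varepsilon\subseteq\mathbb{N}$, $m\in\mathbb{N}$, $p\in Y$ with $y_n\in S^m_\rho(p,\varepsilon)$ for all $n\in N_\varepsilon$.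 A space is cofinally Bourbaki complete if every cofinally Bourbaki-Cauchy sequence has a cluster point. A function between metric spaces is CBC-regular if it maps cofinally Bourbaki-Cauchy sequences to cofinally Bourbaki-Cauchy sequences. *)

From Stdlib Require Import Reals Lra Lia.
Open Scope R_scope.

Record MetricSpace := MkMetricSpace {
  carrier :> Type;
  dist : carrier -> carrier -> R;
  dist_nonneg : forall x y, 0 <= dist x y;
  dist_eq0 : forall x y, dist x y = 0 <-> x = y;
  dist_sym : forall x y, dist x y = dist y x;
  dist_tri : forall x y z, dist x z <= dist x y + dist y z
}.

Arguments dist {m} _ _.

Lemma Rdist_nonneg : forall x y : R, 0 <= Rabs (x - y).
Proof. intros; apply Rabs_pos. Qed.
Lemma Rdist_eq0 : forall x y : R, Rabs (x - y) = 0 <-> x = y.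
Proof.
  intros x y; split; intro H.
  - destruct (Req_dec (x - y) 0) as [E|E]; [lra|].
    exfalso; apply (Rabs_no_R0 _ E); exact H.
  - subst; replace (y - y) with 0 by ring; apply Rabs_R0.
Qed.
Lemma Rdist_sym : forall x y : R, Rabs (x - y) = Rabs (y - x).
Proof. intros; apply Rabs_minus_sym. Qed.
Lemma Rdist_tri : forall x y z : R, Rabs (x - z) <= Rabs (x - y) + Rabs (y - z).
Proof.
  intros; replace (x - z) with ((x - y) + (y - z)) by ring; apply Rabs_triang.
Qed.

Definition R_metric : MetricSpace :=
  MkMetricSpace R (fun x y => Rabs (x - y)) Rdist_nonneg Rdist_eq0 Rdist_sym Rdist_tri.

Section Defs.
Context {X : MetricSpace}.

Definition infinite_nat (N : nat -> Prop) : Prop :=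
  forall m : nat, exists n, (m <= n)%nat /\ N n.

Definition eps_chain (eps : R) (x y : X) : Prop :=
  exists (n : nat) (c : nat -> X),
    c O = x /\ c n = y /\ (forall i, (i < n)%nat -> dist (c i) (c (S i)) < eps).

Definition cofinally_Bourbaki_quasi_Cauchy (u : nat -> X) : Prop :=
  forall eps, 0 < eps ->
    exists N : nat -> Prop, infinite_nat N /\
      forall j k, N j -> N k -> eps_chain eps (u j) (u k).

Definition cluster_point (u : nat -> X) (x : X) : Prop :=
  forall eps, 0 < eps -> forall m : nat, exists n, (m <= n)%nat /\ dist (u n) x < eps.

Definition cofinally_Bourbaki_quasi_complete : Prop :=
  forall u : nat -> X, cofinally_Bourbaki_quasi_Cauchy u -> exists x, cluster_point u x.

(* S^m(p, eps) for m >= 1:  S^1 = open ball, S^m = {y | dist(y, S^{m-1}) < eps}.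
   "dist(y, A) < eps" (inf of distances < eps) is written out as
   "exists a in A, dist y a < eps".  The index 0 is unused (set equal to S^1). *)
Fixpoint Sm (m : nat) (p : X) (eps : R) : X -> Prop :=
  match m with
  | O => fun y => dist p y < eps
  | S O => fun y => dist p y < eps
  | S m' => fun y => exists a, Sm m' p eps a /\ dist y a < eps
  end.

Definition cofinally_Bourbaki_Cauchy (u : nat -> X) : Prop :=
  forall eps, 0 < eps ->
    exists (N : nat -> Prop) (m : nat) (p : X),
      infinite_nat N /\ (1 <= m)%nat /\ forall n, N n -> Sm m p eps (u n).

Definition cofinally_Bourbaki_complete : Prop :=
  forall u : nat -> X, cofinally_Bourbaki_Cauchy u -> exists x, cluster_point u x.

End Defs.

Arguments cofinally_Bourbaki_quasi_complete X : clear implicits.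
Arguments cofinally_Bourbaki_complete X : clear implicits.

Definition CBC_regular {X Y : MetricSpace} (f : X -> Y) : Prop :=
  forall u : nat -> X, cofinally_Bourbaki_Cauchy u ->
    cofinally_Bourbaki_Cauchy (fun n => f (u n)).

(* Apart from (3) ⇒ (1), every implication follows from two facts: cofinally
   Bourbaki-Cauchy sequences are quasi-Cauchy, and a sequence with a cluster
   point is cofinally Bourbaki-Cauchy.

   For (3) ⇒ (1), let u be a quasi-Cauchy sequence without cluster point, and
   let f x be the least K exceeding every n with d(x, u n) < 1/(n+1).  As no
   point is a cluster point of u, f is finite and locally bounded; by
   completeness every cofinally Bourbaki-Cauchy sequence has a cluster point,
   so f maps it to a real sequence that is bounded on an infinite set of
   indices, i.e. (on the real line) to a cofinally Bourbaki-Cauchy sequence.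
   But f (u n) > n, so f ∘ u is bounded on no infinite set of indices. *)

From Stdlib Require Import Reals Lra Lia Classical ClassicalEpsilon Wf_nat.
Open Scope R_scope.

Section CofinalBourbaki.
Context {X : MetricSpace}.

Lemma eps_chain_of_dist_lt eps (x y : X) : dist x y < eps -> eps_chain eps x y.
Proof.
  intro Hxy. exists 1%nat, (fun i => match i with O => x | _ => y end).
  repeat split. intros i Hi. replace i with 0%nat by lia. exact Hxy.
Qed.

Lemma eps_chain_sym eps (x y : X) : eps_chain eps x y -> eps_chain eps y x.
Proof.
  intros [n [c [Hx [Hy Hc]]]].
  exists n, (fun i => c (n - i)%nat). repeat split.
  - now rewrite Nat.sub_0_r.
  - now rewrite Nat.sub_diag.
  - intros i Hi. replace (n - i)%nat with (S (n - S i)) by lia.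
    rewrite dist_sym. apply Hc. lia.
Qed.

Lemma eps_chain_trans eps (x y z : X) :
  eps_chain eps x y -> eps_chain eps y z -> eps_chain eps x z.
Proof.
  intros [n1 [c1 [Hx [Hy1 Hc1]]]] [n2 [c2 [Hy2 [Hz Hc2]]]].
  exists (n1 + n2)%nat, (fun i => if Nat.leb i n1 then c1 i else c2 (i - n1)%nat).
  repeat split.
  - exact Hx.
  - destruct (Nat.leb_spec (n1 + n2) n1).
    + replace n2 with 0%nat in * by lia. rewrite Nat.add_0_r. congruence.
    + now replace (n1 + n2 - n1)%nat with n2 by lia.
  - intros i Hi. destruct (Nat.leb_spec i n1), (Nat.leb_spec (S i) n1).
    + apply Hc1; lia.
    + replace i with n1 by lia. rewrite Hy1, <- Hy2.
      replace (S n1 - n1)%nat with 1%nat by lia. apply Hc2; lia.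
    + lia.
    + replace (S i - n1)%nat with (S (i - n1)) by lia. apply Hc2; lia.
Qed.

Lemma Sm_eps_chain m (p : X) eps y : Sm m p eps y -> eps_chain eps p y.
Proof.
  revert y. induction m as [|[|m] IH]; intros y Hy.
  - now apply eps_chain_of_dist_lt.
  - now apply eps_chain_of_dist_lt.
  - destruct Hy as [a [Ha Hya]].
    apply eps_chain_trans with a; [now apply IH|].
    apply eps_chain_of_dist_lt. now rewrite dist_sym.
Qed.

Lemma Sm_dist_lt m (p : X) eps y : Sm (S m) p eps y -> dist p y < INR (S m) * eps.
Proof.
  revert y. induction m as [|m IH]; intros y Hy.
  - simpl in *. lra.
  - destruct Hy as [a [Ha Hya]].
    specialize (IH a Ha). rewrite S_INR.
    pose proof (dist_tri _ p a y). rewrite (dist_sym _ y a) in Hya. lra.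
Qed.

Lemma cofinally_Bourbaki_Cauchy_quasi_Cauchy (u : nat -> X) :
  cofinally_Bourbaki_Cauchy u -> cofinally_Bourbaki_quasi_Cauchy u.
Proof.
  intros Hu eps Heps. destruct (Hu eps Heps) as [N [m [p [HN [_ HS]]]]].
  exists N; split; [exact HN|]. intros j k Hj Hk.
  apply eps_chain_trans with p; [apply eps_chain_sym|]; eapply Sm_eps_chain; eauto.
Qed.

Lemma cluster_point_cofinally_Bourbaki_Cauchy (u : nat -> X) x :
  cluster_point u x -> cofinally_Bourbaki_Cauchy u.
Proof.
  intros Hx eps Heps. exists (fun n => dist (u n) x < eps), 1%nat, x.
  split; [|split; [lia|]].
  - intro m. destruct (Hx eps Heps m) as [n Hn]. now exists n.
  - intros n Hn. simpl. now rewrite dist_sym.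
Qed.

Lemma cofinally_Bourbaki_quasi_complete_complete :
  cofinally_Bourbaki_quasi_complete X -> cofinally_Bourbaki_complete X.
Proof.
  intros Hq u Hu. now apply Hq, cofinally_Bourbaki_Cauchy_quasi_Cauchy.
Qed.

Lemma cofinally_Bourbaki_quasi_complete_Cauchy :
  cofinally_Bourbaki_quasi_complete X ->
  forall u : nat -> X, cofinally_Bourbaki_quasi_Cauchy u -> cofinally_Bourbaki_Cauchy u.
Proof.
  intros Hq u Hu. destruct (Hq u Hu) as [x Hx].
  exact (cluster_point_cofinally_Bourbaki_Cauchy u x Hx).
Qed.

End CofinalBourbaki.

Lemma R_Sm_of_Rabs_lt m (p y eps : R) :
  0 < eps -> Rabs (p - y) < INR (S m) * eps -> @Sm R_metric (S m) p eps y.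
Proof.
  intro Heps. revert y. induction m as [|m IH]; intros y Hy.
  - simpl in *. lra.
  - rewrite S_INR in Hy. set (r := INR (S m)) in *.
    assert (Hr : 1 <= r) by (apply (le_INR 1); lia).
    (* The intermediate point a splits [p, y] in the ratio r : 1. *)
    exists (p + (y - p) * (r / (r + 1))). split.
    + apply IH.
      replace (p - (p + (y - p) * (r / (r + 1)))) with ((p - y) * (r / (r + 1)))
        by ring.
      rewrite Rabs_mult, (Rabs_pos_eq (r / (r + 1)))
        by (apply Rlt_le, Rdiv_lt_0_compat; lra).
      apply Rmult_lt_reg_r with (r + 1); [lra|].
      replace (Rabs (p - y) * (r / (r + 1)) * (r + 1)) with (Rabs (p - y) * r)
        by (field; lra).
      nra.
    + change (Rabs (y - (p + (y - p) * (r / (r + 1)))) < eps).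
      replace (y - (p + (y - p) * (r / (r + 1)))) with ((y - p) / (r + 1))
        by (field; lra).
      unfold Rdiv. rewrite Rabs_mult, (Rabs_pos_eq (/ (r + 1))), Rabs_minus_sym by (apply Rlt_le, Rinv_0_lt_compat; lra).
      fold (Rabs (p - y) / (r + 1)).
      apply Rmult_lt_reg_r with (r + 1); [lra|].
      replace (Rabs (p - y) / (r + 1) * (r + 1)) with (Rabs (p - y)) by (field; lra).
      lra.
Qed.

Lemma R_cofinally_Bourbaki_Cauchy_iff (v : nat -> R_metric) :
  cofinally_Bourbaki_Cauchy v <->
  exists (N : nat -> Prop) (K : R), infinite_nat N /\ forall n, N n -> Rabs (v n) <= K.
Proof.
  split.
  - intro Hv. destruct (Hv 1 ltac:(lra)) as [N [m [p [HN [Hm HS]]]]].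
    destruct m as [|m]; [lia|].
    exists N, (Rabs p + INR (S m)). split; [exact HN|]. intros n Hn.
    pose proof (Sm_dist_lt m p 1 (v n) (HS n Hn)) as Hd. simpl dist in Hd.
    pose proof (Rabs_triang_inv (v n) p). rewrite Rabs_minus_sym in Hd. lra.
  - intros [N [K [HN HK]]] eps Heps.
    destruct (INR_archimed eps K Heps) as [m Hm].
    exists N, (S m), 0. repeat split; [exact HN|lia|].
    intros n Hn. apply R_Sm_of_Rabs_lt; [exact Heps|].
    rewrite Rminus_0_l, Rabs_Ropp, S_INR. specialize (HK n Hn). lra.
Qed.

Lemma exists_least_nat (P : nat -> Prop) :
  (exists n, P n) -> exists n, P n /\ forall k, P k -> (n <= k)%nat.
Proof.
  intro HP. destruct (dec_inh_nat_subset_has_unique_least_element P) as [n [Hn _]].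
  - intro n. apply classic.
  - exact HP.
  - now exists n.
Qed.

Section NoClusterPoint.
Context {X : MetricSpace} (u : nat -> X).

Definition close_index (x : X) (n : nat) : Prop := dist x (u n) < / (INR n + 1).

Definition bounds_close_indices (x : X) (K : nat) : Prop :=
  forall n, close_index x n -> (n < K)%nat.

Definition least_close_bound (x : X) : nat :=
  epsilon (inhabits 0%nat)
    (fun K => bounds_close_indices x K /\ forall K', bounds_close_indices x K' -> (K <= K')%nat).

Lemma least_close_bound_spec x K :
  bounds_close_indices x K ->
  bounds_close_indices x (least_close_bound x) /\ (least_close_bound x <= K)%nat.
Proof.
  intro HK. unfold least_close_bound.
  destruct (epsilon_spec (inhabits 0%nat) _ (exists_least_nat _ (ex_intro _ K HK)))
    as [Hb Hle].
  split; [exact Hb | exact (Hle K HK)].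
Qed.

Lemma not_cluster_point_far x : ~ cluster_point u x ->
  exists eps, 0 < eps /\ exists M, forall n, (M <= n)%nat -> eps <= dist (u n) x.
Proof.
  intro Hx. apply NNPP. intro Hfar. apply Hx. intros eps Heps m.
  apply NNPP. intro Hnear. apply Hfar. exists eps; split; [exact Heps|]. exists m.
  intros n Hn. apply Rnot_lt_le. intro Hlt. apply Hnear. now exists n.
Qed.

Lemma bounds_close_indices_near x : ~ cluster_point u x ->
  exists d, 0 < d /\ exists K, forall y, dist x y < d -> bounds_close_indices y K.
Proof.
  intro Hx. destruct (not_cluster_point_far x Hx) as [eps [Heps [M HM]]].
  destruct (INR_archimed (eps / 2) 1 ltac:(lra)) as [K0 HK0].
  exists (eps / 2); split; [lra|]. exists (M + K0)%nat.
  intros y Hy n Hn. apply Nat.nlt_ge. intro HMn.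
  assert (Hfar := HM n ltac:(lia)).
  assert (HK0n : INR K0 <= INR n) by (apply le_INR; lia).
  assert (Hsmall : / (INR n + 1) <= eps / 2).
  { pose proof (pos_INR n).
    apply Rmult_le_reg_r with (INR n + 1); [lra|].
    rewrite Rinv_l by lra. nra. }
  unfold close_index in Hn.
  pose proof (dist_tri _ (u n) y x). rewrite (dist_sym _ (u n) y), (dist_sym _ y x) in *.
  lra.
Qed.

Hypothesis no_cluster_point : forall x, ~ cluster_point u x.

Lemma least_close_bound_locally_bounded x :
  exists d, 0 < d /\ exists K, forall y, dist x y < d -> (least_close_bound y <= K)%nat.
Proof.
  destruct (bounds_close_indices_near x (no_cluster_point x)) as [d [Hd [K HK]]].
  exists d; split; [exact Hd|]. exists K. intros y Hy.
  exact (proj2 (least_close_bound_spec y K (HK y Hy))).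
Qed.

Lemma lt_least_close_bound n : (n < least_close_bound (u n))%nat.
Proof.
  destruct (bounds_close_indices_near (u n) (no_cluster_point (u n))) as [d [Hd [K HK]]].
  assert (Hself : dist (u n) (u n) = 0) by now apply dist_eq0.
  assert (HbK : bounds_close_indices (u n) K) by (apply HK; lra).
  apply (proj1 (least_close_bound_spec _ _ HbK)).
  unfold close_index. rewrite Hself.
  apply Rinv_0_lt_compat. pose proof (pos_INR n). lra.
Qed.

Lemma least_close_bound_CBC_regular :
  cofinally_Bourbaki_complete X ->
  CBC_regular (fun x => INR (least_close_bound x) : R_metric).
Proof.
  intros Hc v Hv. apply R_cofinally_Bourbaki_Cauchy_iff.
  destruct (Hc v Hv) as [x Hx].
  destruct (least_close_bound_locally_bounded x) as [d [Hd [K HK]]].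
  exists (fun n => dist (v n) x < d), (INR K). split.
  - intro m. destruct (Hx d Hd m) as [n Hn]. now exists n.
  - intros n Hn. rewrite Rabs_pos_eq by apply pos_INR.
    apply le_INR, HK. now rewrite dist_sym.
Qed.

Lemma least_close_bound_not_CBC :
  ~ cofinally_Bourbaki_Cauchy (fun n => INR (least_close_bound (u n)) : R_metric).
Proof.
  rewrite R_cofinally_Bourbaki_Cauchy_iff. intros [N [K [HN HK]]].
  destruct (INR_unbounded K) as [k Hk].
  destruct (HN k) as [n [Hkn Hn]].
  specialize (HK n Hn). rewrite Rabs_pos_eq in HK by apply pos_INR.
  apply le_INR in Hkn. pose proof (lt_INR _ _ (lt_least_close_bound n)). lra.
Qed.

End NoClusterPoint.

Lemma quasi_complete_of_real_CBC_regular (X : MetricSpace) :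
  cofinally_Bourbaki_complete X ->
  (forall f : X -> R_metric, CBC_regular f ->
     forall u : nat -> X, cofinally_Bourbaki_quasi_Cauchy u ->
       cofinally_Bourbaki_Cauchy (fun n => f (u n))) ->
  cofinally_Bourbaki_quasi_complete X.
Proof.
  intros Hc Hf u Hu. apply NNPP. intro Hnone.
  assert (Hno : forall x, ~ cluster_point u x) by (intros x Hx; apply Hnone; now exists x).
  apply (least_close_bound_not_CBC u Hno).
  exact (Hf _ (least_close_bound_CBC_regular u Hno Hc) u Hu).
Qed.

Theorem mainTheorem9 (X : MetricSpace) :
  let P1 := cofinally_Bourbaki_quasi_complete X in
  let P2 := cofinally_Bourbaki_complete X /\
      forall (Y : MetricSpace) (f : X -> Y), CBC_regular f ->
        forall u : nat -> X, cofinally_Bourbaki_quasi_Cauchy u ->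
          cofinally_Bourbaki_Cauchy (fun n => f (u n)) in
  let P3 := cofinally_Bourbaki_complete X /\
      forall f : X -> R_metric, CBC_regular f ->
        forall u : nat -> X, cofinally_Bourbaki_quasi_Cauchy u ->
          cofinally_Bourbaki_Cauchy (fun n => f (u n)) in
  let P4 := cofinally_Bourbaki_complete X /\
      forall u : nat -> X, cofinally_Bourbaki_quasi_Cauchy u ->
        cofinally_Bourbaki_Cauchy u in
  (P1 <-> P2) /\ (P1 <-> P3) /\ (P1 <-> P4).
Proof.
  intros P1 P2 P3 P4.
  pose proof (@cofinally_Bourbaki_quasi_complete_complete X) as Hcomplete.
  pose proof (@cofinally_Bourbaki_quasi_complete_Cauchy X) as HCauchy.
  assert (H12 : P1 -> P2).
  { intro H1. split; [now apply Hcomplete|]. intros Y f Hf u Hu. now apply Hf, (HCauchy H1). }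
  assert (H23 : P2 -> P3) by (intros [Hc H2]; split; [exact Hc | exact (H2 R_metric)]).
  assert (H31 : P3 -> P1)
    by (intros [Hc H3]; exact (quasi_complete_of_real_CBC_regular X Hc H3)).
  assert (H14 : P1 -> P4) by (intro H1; split; [now apply Hcomplete | exact (HCauchy H1)]).
  assert (H41 : P4 -> P1) by (intros [Hc H4] u Hu; now apply Hc, H4).
  tauto.
Qed.
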